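(* Let $\mathcal{G}$ be a connected undirected network graph with a given set of monitors, let $\mathcal{B}$ be a biconnected component of $\mathcal{G}$, and let $\mathcal{T}$ be a triconnected component of $\mathcal{B}$ with vantages $\{\mu_i\}$. Then for each vantage $\mu_i$ there exists an external $\mu_i$-to-agent path $\mathcal{P}_i$ (where $\mathcal{P}_i$ is the degenerate single-node path $\mu_i$ if $\mu_i$ is an agent) such that $\mathcal{P}_i$ is internally vertex disjoint from all the other $\mu_j$-to-agent paths $\mathcal{P}_j$, $j\neq i$.
   Context: $\mathcal{G}$ is an undirected connected graph; some nodes are monitors. A biconnected component is a maximal 2-vertex-connected subgraph (or a bridge). For a biconnected component $\mathcal{B}$, a node $v\in V(\mathcal{B})$ is an agent of $\mathcal{B}$ if $v$ is a monitor, or $v$ is a cut-vertex of $\mathcal{G}$ through which $\mathcal{B}$ is connected to a monitor outside $\mathcal{B}$. The triconnected components of $\mathcal{B}$ are obtained by the standard (Hopcroft–Tarjan) decomposition: repeatedly splitting along 2-vertex cuts $\{a,b\}$, adding a virtual link $ab$ to each side, until every piece is 3-vertex-connected, a triangle, or a single link. For a triconnected component $\mathcal{T}$ of $\mathcal{B}$, a node of $\mathcal{T}$ is a vantage if it is an agent of $\mathcal{B}$, or it belongs to a 2-vertex cut $\{a,b\}\subseteq V(\mathcal{T})$ of $\mathcal{B}$ that separates $\mathcal{T}$ from some agent of $\mathcal{B}$. An external $\mu$-to-agent path is a path in $\mathcal{G}$ from the vantage $\mu$ to an agent of $\mathcal{B}$ none of whose vertices other than $\mu$ lies in $\mathcal{T}$.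 Two paths are internally vertex disjoint if no internal vertex of either path lies on the other path (they may share end-points). *)

(* Finite simple graphs over a finType V, given by a
   symmetric irreflexive relation G : rel V. *)
From mathcomp Require Import all_boot.
Set Implicit Arguments. Unset Strict Implicit. Unset Printing Implicit Defensive.

Section Defs.
Variable V : finType.
Variable G : rel V.

Definition induced (S : {set V}) : rel V :=
  [rel x y | [&& x \in S, y \in S & G x y]].

Definition connected_on (S : {set V}) : Prop :=
  forall u w, u \in S -> w \in S -> connect (induced S) u w.

Definition two_connected (S : {set V}) : Prop :=
  3 <= #|S| /\ connected_on S /\ forall v, v \in S -> connected_on (S :\ v).

Definition bridge_set (S : {set V}) : Prop :=
  exists u v, [/\ u != v, S = [set u; v] & G u v].

(* biconnected component: maximal 2-vertex-connected subgraph, or a bridge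
   (biconnected components are induced subgraphs, so they are given by
   their vertex sets) *)
Definition biconnected_component (B : {set V}) : Prop :=
  (two_connected B \/ bridge_set B) /\
  forall S, (two_connected S \/ bridge_set S) -> B \subset S -> S = B.

Definition cut_vertex (v : V) : Prop :=
  exists u w, [/\ u != v, w != v & ~~ connect (induced (~: [set v])) u w].

Definition agent (M B : {set V}) (v : V) : Prop :=
  v \in B /\
  (v \in M \/
   (cut_vertex v /\
    exists (m : V) (p : seq V),
      [/\ m \in M, m \notin B, path G v p, last v p = m & all (fun x => x \notin B) p])).

(* A multigraph on V is a sequence of links, each link being its 2-element set
   of end-points; parallel links (real or virtual) are repeated entries. *)
Definition vset (E : seq {set V}) : {set V} := \bigcup_(e <- E) e.

Definition links_of (B : {set V}) : seq {set V} :=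
  enum [set e : {set V} | (e \subset B) &&
                          [exists u, exists v, (e == [set u; v]) && G u v]].

(* splitting the multigraph E along the 2-vertex cut {a,b}: E is divided into
   E1, E2 with at least two links each, sharing exactly the vertices a, b;
   a virtual link ab is added to each side. *)
Definition split_at (E : seq {set V}) (a b : V) (E1' E2' : seq {set V}) : Prop :=
  a != b /\
  exists E1 E2 : seq {set V},
    [/\ perm_eq E (E1 ++ E2), 2 <= size E1, 2 <= size E2,
        vset E1 :&: vset E2 = [set a; b] &
        E1' = [set a; b] :: E1 /\ E2' = [set a; b] :: E2].

Inductive split_pieces (B : {set V}) : seq (seq {set V}) -> Prop :=
| sp_init : split_pieces B [:: links_of B]
| sp_step Ps P a b P1 P2 :
    split_pieces B Ps -> P \in Ps -> split_at P a b P1 P2 ->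
    split_pieces B (P1 :: P2 :: rem P Ps).

Definition fully_split (Ps : seq (seq {set V})) : Prop :=
  forall P a b P1 P2, P \in Ps -> ~ split_at P a b P1 P2.

Definition triconnected_component (B T : {set V}) : Prop :=
  exists Ps P, [/\ split_pieces B Ps, fully_split Ps, P \in Ps & T = vset P].

Definition two_cut (B : {set V}) (a b : V) : Prop :=
  [/\ a != b, a \in B, b \in B &
      exists u w, [/\ u \in B :\: [set a; b], w \in B :\: [set a; b] &
                      ~~ connect (induced (B :\: [set a; b])) u w]].

Definition separates (M B T : {set V}) (a b w : V) : Prop :=
  [/\ two_cut B a b, agent M B w, w \notin [set a; b] &
      exists x, x \in T :\: [set a; b] /\
                ~~ connect (induced (B :\: [set a; b])) w x].

Definition vantage (M B T : {set V}) (v : V) : Prop :=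
  v \in T /\
  (agent M B v \/
   exists a b w, [/\ v \in [set a; b], a \in T, b \in T & separates M B T a b w]).

(* a path is given by its start vertex x and the sequence p of the following
   vertices; it is simple if x :: p is duplicate-free *)
Definition external_path (M B T : {set V}) (mu : V) (p : seq V) : Prop :=
  [/\ path G mu p, uniq (mu :: p), agent M B (last mu p) &
      all (fun x => x \notin T) p].

(* internal vertices of the path x :: p (all but the two end-points) *)
Definition inner (x : V) (p : seq V) : seq V := behead (belast x p).

End Defs.

From mathcomp Require Import all_boot.
From Stdlib Require Import Classical ClassicalEpsilon.
Set Implicit Arguments. Unset Strict Implicit. Unset Printing Implicit Defensive.

(* Hopcroft-Tarjan splitting keeps two properties of the pieces of B: every
   link, real or virtual, is realised by a path of B whose inner vertices avoid
   the piece, and deleting any vertex leaves the piece connected through its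
   links.  In a piece T that cannot be split further, this forces any two
   vertices of T outside a pair {a, b} of T to be connected in B - {a, b}.
   Hence, when {a, b} separates T from an agent w, the component of w in
   B - {a, b} misses T, and it determines {a, b}; components of different pairs
   are disjoint.  As B - v is connected for every v, that component carries a
   simple a-b path through w, and cutting it at w gives internally disjoint
   paths from a and from b to the agent w. *)

Section Connect.
Variables (T : finType) (e : rel T).

Lemma connect_ind (P : T -> Prop) x y :
  connect e x y -> P x -> (forall u v, e u v -> P u -> P v) -> P y.
Proof.
move=> /connectP [p pth ->]; elim: p x pth => [|z p IH] x //= /andP [exz pz] Px Pe.
exact: IH pz (Pe _ _ exz Px) Pe.
Qed.

Lemma connect_exit (K : {set T}) x y : connect e x y -> x \in K -> y \notin K ->
  exists u v, [/\ u \in K, v \notin K, e u v & connect (induced e K) x u].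
Proof.
move=> /connectP [p pth ->]; elim: p x pth => [|z p IH] x /=; first by move=> _ ->.
move=> /andP [exz pz] xK yK; case zK: (z \in K); last by exists x, z; rewrite zK.
have [u [v [uK vK euv xu]]] := IH z pz zK yK.
by exists u, v; split=> //; apply: connect_trans xu; apply: connect1; rewrite /induced /= xK zK.
Qed.

Lemma connect_map (e' : rel T) (f : T -> T) x y :
  (forall u v, e u v -> f u = f v \/ e' (f u) (f v)) -> connect e x y -> connect e' (f x) (f y).
Proof.
move=> fe xy; apply: (connect_ind (P := fun z => connect e' (f x) (f z)) xy) => // u v euv xu.
by case: (fe u v euv) => [<- // | e'uv]; apply: connect_trans xu (connect1 e'uv).
Qed.

End Connect.

Lemma size_gt1 (T : eqType) (s : seq T) x y : x \in s -> y \in s -> x != y -> 1 < size s.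
Proof. by case: s => [|z [|z' s]] //=; rewrite !inE => /eqP -> /eqP ->; rewrite eqxx. Qed.

Lemma uniq_cat_insert (T : eqType) (s1 s2 s3 : seq T) :
  uniq (s1 ++ s3) -> uniq s2 -> {in s2, forall z, z \notin s1 ++ s3} -> uniq (s1 ++ s2 ++ s3).
Proof.
move=> u13 u2 s2_out; rewrite (perm_uniq (permEl (perm_catCA s1 s2 s3))) cat_uniq u13 u2 /=.
by rewrite andbT; apply/hasPn => z z13; apply/negP => /s2_out; rewrite z13.
Qed.

Lemma rev_belast_cons (T : Type) (x : T) s : last x s :: rev (belast x s) = rev (x :: s).
Proof. by rewrite [in RHS]lastI rev_rcons. Qed.

Lemma rev_belast_cat (T : eqType) (x y : T) s1 s2 : s2 != [::] ->
  exists r, rev (belast x (s1 ++ y :: s2)) = r ++ y :: rev (x :: s1).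
Proof.
case: s2 => [|z s2] // _; exists (rev (belast z s2)).
rewrite belast_cat /= -[rev (x :: s1)]rev_belast_cons rev_cat.
by rewrite (rev_cons (last x s1)) (rev_cons y) -!cats1 -!catA.
Qed.

Lemma disjoint_seqP (T : finType) (s1 s2 : seq T) :
  reflect (forall z, z \in s1 -> z \in s2 -> False) [disjoint s1 & s2].
Proof.
rewrite disjoint_has; apply: (iffP hasPn) => s12 z z1; last by apply/negP => /(s12 z z1).
by move/negP: (s12 z z1).
Qed.

Lemma mem_inner (T : finType) (x : T) s z : z \in inner x s -> z \in s.
Proof. by case: s => [|y s] //; rewrite /inner /= => /mem_belast. Qed.

Lemma inner_neq_last (T : finType) (x : T) s z : uniq s -> z \in inner x s -> z != last x s.
Proof.
case: s => [|y s] // u; rewrite /inner /=.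
by move: u; rewrite lastI rcons_uniq => /andP [nl _]; apply: contraTneq => ->.
Qed.

Lemma eq_set2 (T : finType) (c d u v : T) :
  [set c; d] = [set u; v] -> (c = u /\ d = v) \/ (c = v /\ d = u).
Proof.
move=> E.
have cin : c \in [set u; v] by rewrite -E set21.
have din : d \in [set u; v] by rewrite -E set22.
have uin : u \in [set c; d] by rewrite E set21.
have vin : v \in [set c; d] by rewrite E set22.
move: cin din uin vin; rewrite !inE.
case/orP=> /eqP ec; case/orP => /eqP ed; subst; rewrite ?eqxx ?orbT /=; auto.
- by move=> _; rewrite orbb => /eqP ->; auto.
- by rewrite orbb => /eqP -> _; auto.
Qed.

Lemma set2_of_mem (T : finType) (a b x y : T) :
  x \in [set a; b] -> y \in [set a; b] -> x != y -> [set x; y] = [set a; b].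
Proof.
rewrite !inE => /orP [/eqP->|/eqP->] /orP [/eqP->|/eqP->]; rewrite ?eqxx // => _.
exact: setUC.
Qed.

Lemma set2_other (T : finType) (a b x y z : T) :
  x \in [set a; b] -> y \in [set a; b] -> z \in [set a; b] -> x != y -> z != y -> z = x.
Proof. by do 3 case/set2P=> ->; rewrite ?eqxx. Qed.

Section InducedSubgraph.
Variables (V : finType) (G : rel V).
Implicit Types S : {set V}.

Lemma connect_induced_sub S1 S2 x y :
  S1 \subset S2 -> connect (induced G S1) x y -> connect (induced G S2) x y.
Proof.
move=> /subsetP S12; apply: connect_sub => u v /and3P [/S12 uS /S12 vS guv].
by apply: connect1; rewrite /induced /= uS vS.
Qed.

Lemma connect_induced_induced S K x y :
  connect (induced (induced G S) K) x y -> connect (induced G K) x y.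
Proof.
apply: connect_sub => u v /and3P [uK vK /and3P [_ _ guv]].
by apply: connect1; rewrite /induced /= uK vK.
Qed.

Lemma induced_path_mem S x s : path (induced G S) x s -> all (mem S) s.
Proof. by elim: s x => [|y s IH] x //= /andP [/and3P [_ -> _] /IH]. Qed.

Lemma induced_path S x s : path (induced G S) x s -> path G x s.
Proof. by apply: sub_path => u v /and3P []. Qed.

Definition component S w := [set z in S | connect (induced G S) w z].

Lemma component_sub S w : component S w \subset S.
Proof. by apply/subsetP => z; rewrite inE => /andP []. Qed.

Lemma component_closed S w u v :
  u \in component S w -> v \in S -> G u v -> v \in component S w.
Proof.
rewrite !inE => /andP [uS wu] vS guv; rewrite vS /=.
by apply: connect_trans wu (connect1 _); rewrite /induced /= uS vS.
Qed.

Lemma connect_component S w z :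
  z \in component S w -> connect (induced G (component S w)) w z.
Proof.
rewrite inE => /andP [_ wz].
pose P v := connect (induced G (component S w)) w v /\ connect (induced G S) w v.
suff [] : P z by [].
apply: (connect_ind wz) => [|u v uv [wu wu']]; first by split.
have wv := connect_trans wu' (connect1 uv).
split=> //; apply: connect_trans wu (connect1 _).
by move: uv => /and3P [uS vS guv]; rewrite /induced /= !inE uS vS wu' wv.
Qed.

Hypothesis symG : symmetric G.

Lemma induced_sym S : symmetric (induced G S).
Proof. by move=> x y; rewrite /induced /= symG andbCA. Qed.

Lemma connect_induced_sym S x y : connect (induced G S) x y = connect (induced G S) y x.
Proof. by rewrite (sym_connect_sym (induced_sym S)). Qed.

Lemma component_connected S w : connected_on G (component S w).
Proof.
move=> u v /connect_component wu /connect_component wv.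
by apply: connect_trans wv; rewrite connect_induced_sym.
Qed.

End InducedSubgraph.

(** * Paths through a component of B - {a, b} *)

Section Fan.
Variables (V : finType) (G : rel V).
Hypotheses (symG : symmetric G) (irrG : irreflexive G).

Definition ab_path (R : {set V}) (a b : V) (q : seq V) :=
  [/\ path G a q, last a q = b, uniq (a :: q) & all (fun z => (z \in R) || (z == b)) q].

Lemma ab_path_rev R a b q : ab_path R a b q -> ab_path R b a (rev (belast a q)).
Proof.
move=> [aq qb uq qR]; split.
- by rewrite -qb rev_path (@eq_path _ _ G) // => x y; apply: symG.
- by rewrite -[last b _](last_cons a) -{1}qb rev_belast_cons /= rev_cons last_rcons.
- by rewrite -qb rev_belast_cons rev_uniq.
apply/allP => z; rewrite mem_rev => zq.
have := mem_belast zq; rewrite inE => /orP [->|/(allP qR)]; first by rewrite orbT.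
case/orP=> [->//|/eqP zb].
by move: uq; rewrite lastI rcons_uniq qb -zb zq.
Qed.

Lemma ab_path_detour_after R a b q1 w' q2 w s h :
  ab_path R a b (q1 ++ w' :: q2) -> h \in q2 -> G w' w -> path G w s -> G (last w s) h ->
  uniq (w :: s) -> (forall z, z \in w :: s -> (z \in R) && (z \notin a :: q1 ++ w' :: q2)) ->
  exists q', ab_path R a b q' /\ w \in q'.
Proof.
move=> + hq2 gw ws gh us; case/splitPr: hq2 => q21 q22 [aq qb uq qR] sR.
set q := q1 ++ w' :: q21 ++ h :: q22 in aq qb uq qR sR.
have subq : subseq ((q1 ++ [:: w']) ++ h :: q22) q.
  by rewrite -catA; apply: cat_subseq (subseq_refl q1) _; rewrite /= eqxx suffix_subseq.
have sub : subseq (a :: (q1 ++ [:: w']) ++ h :: q22) (a :: q) by rewrite /= eqxx.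
exists ((q1 ++ [:: w']) ++ (w :: s) ++ (h :: q22)).
split; last by rewrite !mem_cat !inE eqxx !orbT.
split.
- move: aq; rewrite /q -catA !cat_path /= !cat_path /=.
  by case/and5P => -> -> _ _ ->; rewrite gw ws gh.
- by move: qb; rewrite /q -catA !last_cat /= !last_cat.
- rewrite -cat_cons; apply: uniq_cat_insert => // [|z /sR /andP [_]].
    exact: subseq_uniq sub uq.
  by apply: contra; apply: (mem_subseq sub).
apply/allP => z; rewrite !mem_cat orbCA => /orP [/sR /andP [-> //]|zq].
by apply: (allP qR); apply: (mem_subseq subq); rewrite !mem_cat.
Qed.

Lemma mem_ab_path_rev R a b q z : ab_path R a b q ->
  (z \in b :: rev (belast a q)) = (z \in a :: q).
Proof. by case=> _ qb _ _; rewrite -qb rev_belast_cons mem_rev. Qed.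

Lemma ab_path_detour R a b q w' w s h :
  ab_path R a b q -> w' \in q -> w' != b -> h \in a :: q -> h != w' ->
  G w' w -> path G w s -> G (last w s) h -> uniq (w :: s) ->
  (forall z, z \in w :: s -> (z \in R) && (z \notin a :: q)) ->
  exists q', ab_path R a b q' /\ w \in q'.
Proof.
move=> gq w'q w'b hq hw' gw ws gh us sR.
case/splitPr: w'q gq hq sR => q1 q2 gq hq sR.
have /orP [hq2|hq1] : (h \in q2) || (h \in a :: q1).
  by move: hq; rewrite -cat_cons mem_cat inE (negbTE hw') orbC.
  exact: ab_path_detour_after gq hq2 gw ws gh us sR.
(* [h] precedes [w'] on [q]: make the detour on the reversed path. *)
have [r Er] : exists r, rev (belast a (q1 ++ w' :: q2)) = r ++ w' :: rev (a :: q1).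
  apply: rev_belast_cat; apply: contra w'b => /eqP q20.
  by case: gq => _ <- _ _; rewrite q20 last_cat.
have gr := ab_path_rev gq; rewrite Er in gr.
have sR' z : z \in w :: s -> (z \in R) && (z \notin b :: r ++ w' :: rev (a :: q1)).
  by rewrite -Er (mem_ab_path_rev _ gq); apply: sR.
have hr : h \in rev (a :: q1) by rewrite mem_rev.
have [q' [gq' wq']] := ab_path_detour_after gr hr gw ws gh us sR'.
exists (rev (belast b q')); split; first exact: ab_path_rev gq'.
have := sR w (mem_head _ _); rewrite inE negb_or => /and3P [_ /negbTE wa _].
by move: (mem_ab_path_rev w gq'); rewrite !inE wq' wa orbT.
Qed.

Section Cut.
Variables (R : {set V}) (a b t : V) (q1 q2 : seq V).
Hypotheses (gq : ab_path R a b (q1 ++ t :: q2)) (tR : t \in R).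

Lemma ab_path_suffix_last : last t q2 = b.
Proof. by case: gq; rewrite last_cat. Qed.

Lemma ab_path_uniq_split : uniq (a :: q1 ++ t :: q2).
Proof. by case: gq. Qed.

Lemma ab_path_prefix :
  [/\ path G a (rcons q1 t), uniq (a :: rcons q1 t), last a (rcons q1 t) = t &
      all (mem R) (rcons q1 t)].
Proof.
have [aq _ uq qR] := gq; split; last 1 first.
- apply/allP => z; rewrite mem_rcons inE => /orP [/eqP -> //|zq1].
  have zq : z \in q1 ++ t :: q2 by rewrite mem_cat zq1.
  have /orP [//|/eqP zb] := allP qR z zq.
  move: uq; rewrite cons_uniq cat_uniq => /andP [_ /and3P [_ /hasPn /(_ z) + _]].
  have zq2 : z \in t :: q2 by rewrite zb -ab_path_suffix_last mem_last.
  by move=> /(_ zq2); rewrite zq1.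
- by move: aq; rewrite cat_path rcons_path /= => /and3P [-> -> _].
- apply: subseq_uniq uq; rewrite -cats1 /=.
  by rewrite eqxx -[q1 ++ t :: q2]/(q1 ++ [:: t] ++ q2) catA prefix_subseq.
- exact: last_rcons.
Qed.

Lemma ab_path_suffix :
  [/\ path G b (rev (belast t q2)), uniq (b :: rev (belast t q2)),
      last b (rev (belast t q2)) = t & all (mem R) (rev (belast t q2))].
Proof.
have [aq _ uq qR] := gq; have tq2b := ab_path_suffix_last.
have ut2 : uniq (t :: q2).
  by apply: subseq_uniq ab_path_uniq_split; rewrite -cat_cons suffix_subseq.
split.
- rewrite -tq2b rev_path (@eq_path _ _ G) => [|x y]; last exact: symG.
  by move: aq; rewrite cat_path /= => /and3P [].
- by rewrite -tq2b rev_belast_cons rev_uniq.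
- by rewrite -[last b _](last_cons t) -{1}tq2b rev_belast_cons /= rev_cons last_rcons.
apply/allP => z; rewrite mem_rev => zq2.
have := mem_belast zq2; rewrite inE => /orP [/eqP -> //|zq].
have zq' : z \in q1 ++ t :: q2 by rewrite mem_cat inE zq !orbT.
have /orP [//|/eqP zb] := allP qR z zq'.
by move: ut2; rewrite lastI rcons_uniq tq2b -zb zq2.
Qed.

Lemma disjoint_prefix_suffix : [disjoint inner a (rcons q1 t) & b :: rev (belast t q2)].
Proof.
apply/disjoint_seqP => z; rewrite /inner belast_rcons /= -ab_path_suffix_last.
rewrite rev_belast_cons mem_rev => zq1 ztq2.
move: ab_path_uniq_split; rewrite cons_uniq cat_uniq => /andP [_ /and3P [_ /hasPn tq2 _]].
by move: (tq2 z ztq2); rewrite zq1.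
Qed.

Lemma disjoint_suffix_prefix : [disjoint inner b (rev (belast t q2)) & a :: rcons q1 t].
Proof.
have [_ ub bt _] := ab_path_suffix.
apply/disjoint_seqP => z zin; have zt : z != t.
  by rewrite -bt; apply: inner_neq_last zin; case/andP: ub.
have := mem_inner zin; rewrite mem_rev => /mem_belast; rewrite inE (negbTE zt) /= => zq2.
move: ab_path_uniq_split; rewrite cons_uniq mem_cat inE cat_uniq.
case/andP=> /norP [_ /norP [_ aq2]] /and3P [_ /hasPn tq2 _].
rewrite inE mem_rcons inE (negbTE zt) /= => /orP [/eqP za|zq1].
  by move: aq2; rewrite -za zq2.
by move: (tq2 z); rewrite inE zq2 orbT zq1 => /(_ isT).
Qed.

End Cut.

Definition fan (R : {set V}) (a b t : V) (f : V -> seq V) :=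
  (forall mu, mu \in [set a; b] ->
     [/\ path G mu (f mu), uniq (mu :: f mu), last mu (f mu) = t & all (mem R) (f mu)]) /\
  (forall mu nu, mu \in [set a; b] -> nu \in [set a; b] -> mu != nu ->
     [disjoint inner mu (f mu) & nu :: f nu]).

Lemma ab_path_fan R a b q t : a != b -> ab_path R a b q -> t \in q -> t \in R ->
  exists f, fan R a b t f.
Proof.
move=> ab gq /splitPr E tR; case: E gq => q1 q2 gq.
exists (fun mu => if mu == a then rcons q1 t else rev (belast t q2)).
have oth mu : mu \in [set a; b] -> mu != a -> mu = b.
  by rewrite !inE => /orP [/eqP -> /eqP //|/eqP ->].
split=> [mu mab|mu nu mab nab mn].
  case: eqVneq => [->|/(oth _ mab) ->]; first exact: ab_path_prefix gq tR.
  exact: ab_path_suffix gq tR.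
case: (eqVneq mu a) => [ma|/(oth _ mab) mb].
  have nb : nu = b by apply: oth; rewrite // -ma eq_sym.
  by rewrite ma nb eq_sym (negbTE ab); apply: disjoint_prefix_suffix gq.
have na : nu = a by move: nab mn; rewrite mb !inE => /orP [/eqP|/eqP ->] //; rewrite eqxx.
by rewrite mb na eqxx; apply: disjoint_suffix_prefix gq tR.
Qed.

Section Grow.
Variable B : {set V}.
Hypothesis B2conn : forall v, connected_on G (B :\ v).
Variables (R : {set V}) (a b : V).
Hypotheses (ab : a != b) (bB : b \in B).
Hypothesis RB : R \subset B :\: [set a; b].
Hypothesis R_closed : forall u v, u \in R -> v \in B :\: [set a; b] -> G u v -> v \in R.

Lemma notin_R_a : a \notin R.
Proof. by apply/negP => /(subsetP RB); rewrite !inE eqxx. Qed.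

Lemma notin_R_b : b \notin R.
Proof. by apply/negP => /(subsetP RB); rewrite !inE eqxx orbT. Qed.

Lemma R_out_neighbour u v : u \in R -> v \in B -> v \notin R -> G u v -> v \in [set a; b].
Proof.
move=> uR vB vR guv; apply: contraNT vR => vab.
by apply: R_closed guv; rewrite // inE vab.
Qed.

Lemma ab_path_extend q w' w : ab_path R a b q -> w' \in q -> w' \in R -> w \in R -> G w' w ->
  exists q', ab_path R a b q' /\ w \in q'.
Proof.
move=> gq w'q w'R wR gw; have [wq|wq] := boolP (w \in q); first by exists q.
have wB : w \in B by have /setDP [] := subsetP RB w wR.
have w'b : w' != b by apply: contraNneq notin_R_b => <-.
have ww' : w != w' by apply: contraTneq gw => ->; rewrite irrG.
have wS : w \in B :\ w' by rewrite !inE ww'.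
have bS : b \in B :\ w' by rewrite !inE eq_sym w'b.
(* [w] reaches [b] in [B :\ w']; the first vertex off [R] minus the path lies
   on [a :: q] and closes a detour from [w']. *)
have wb := B2conn wS bS.
set K := [set z in R | z \notin a :: q].
have wK : w \in K.
  by rewrite !inE wR (negbTE wq) orbF; apply: contraNneq notin_R_a => <-.
have bK : b \notin K by rewrite inE (negbTE notin_R_b).
have [u [h [uK hK /and3P [_ /setD1P [hw' hB] guh] wu]]] := connect_exit wb wK bK.
have uR : u \in R by case/setIdP: uK.
have hq : h \in a :: q.
  apply: contraNT hK => hq; rewrite inE hq andbT.
  apply: contraNT hq => hR; have := R_out_neighbour uR hB hR guh.
  by case: gq => _ qb _ _; case/set2P => ->; rewrite ?mem_head // -qb mem_last.
case/connectP: (connect_induced_induced wu) => p pK uE; subst u.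
move: guh; case: (shortenP pK) => s sK us _ gsh.
apply: ab_path_detour gq w'q w'b hq hw' gw (induced_path sK) gsh us _.
move=> z; rewrite inE => /orP [/eqP -> //|zs]; first by case/setIdP: wK => -> ->.
by have /setIdP [-> ->] := allP (induced_path_mem sK) z zs.
Qed.

Lemma ab_path_start r : r \in R -> G a r -> exists q, ab_path R a b q /\ r \in q.
Proof.
move=> rR ar.
have rB : r \in B by have /setDP [] := subsetP RB r rR.
have rS : r \in B :\ a by rewrite !inE rB andbT; apply: contraNneq notin_R_a => <-.
have bS : b \in B :\ a by rewrite !inE eq_sym ab.
have rb := B2conn rS bS.
have [u [v [uR vR /and3P [_ /setD1P [va vB] guv] ru]]] := connect_exit rb rR notin_R_b.
have vb : v = b.
  by move: (R_out_neighbour uR vB vR guv); rewrite !inE (negbTE va) => /eqP.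
have {}rb : connect (induced G (b |: R)) r b.
  apply: connect_trans (connect_induced_sub (subsetUr _ _) _) (connect1 _).
    exact: connect_induced_induced ru.
  by rewrite /induced /= !inE eqxx uR -vb guv orbT.
case/connectP: rb => p pbR; case: (shortenP pbR) => s sbR us _ sb.
have sR := allP (induced_path_mem sbR).
have ra : r != a by apply: contraNneq notin_R_a => <-.
exists (r :: s); split; rewrite ?mem_head //; split.
- by rewrite /= ar (induced_path sbR).
- by rewrite sb.
- rewrite [uniq (a :: _)]cons_uniq us andbT inE negb_or eq_sym ra /=.
  by apply/negP => /sR; rewrite !inE (negbTE notin_R_a) (negbTE ab).
- by rewrite /= rR; apply/allP => z /sR; rewrite !inE orbC.
Qed.

Hypothesis R_conn : connected_on G R.

Lemma ab_path_through r z : r \in R -> G a r -> z \in R ->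
  exists q, ab_path R a b q /\ z \in q.
Proof.
move=> rR ar zR.
apply: (connect_ind (P := fun v => exists q, ab_path R a b q /\ v \in q) (R_conn rR zR)).
  exact: ab_path_start.
move=> u v /and3P [uR vR guv] [q [gq uq]]; exact: ab_path_extend gq uq uR vR guv.
Qed.

End Grow.

End Fan.

(** * Pieces of the splitting *)

Section Vset.
Variable V : finType.
Implicit Types (E : seq {set V}) (e : {set V}).

Lemma vsetP E z : reflect (exists2 e, e \in E & z \in e) (z \in vset E).
Proof.
elim: E => [|e E IH]; rewrite /vset ?big_nil ?big_cons.
  by rewrite in_set0; constructor; case.
rewrite in_setU; apply: (iffP orP) => [[ze|/IH [e' e'E ze']]|[e']].
- by exists e; rewrite ?mem_head.
- by exists e'; rewrite // inE e'E orbT.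
- by rewrite inE => /orP [/eqP -> ->|e'E ze']; [left | right; apply/IH; exists e'].
Qed.

Lemma mem_vset E e z : e \in E -> z \in e -> z \in vset E.
Proof. by move=> eE ze; apply/vsetP; exists e. Qed.

Lemma vset_cons e E : vset (e :: E) = e :|: vset E.
Proof. by rewrite /vset big_cons. Qed.

Lemma vset_perm_cat E E1 E2 : perm_eq E (E1 ++ E2) -> vset E = vset E1 :|: vset E2.
Proof. by move=> pE; rewrite /vset (perm_big _ pE) big_cat. Qed.

Definition link_rel E : rel V := [rel x y | (x != y) && ([set x; y] \in E)].

Lemma link_rel_sym E : symmetric (link_rel E).
Proof. by move=> x y; rewrite /link_rel /= eq_sym setUC. Qed.

Lemma link_rel_vset E x y : link_rel E x y -> (x \in vset E) && (y \in vset E).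
Proof. by case/andP=> _ xyE; rewrite !(mem_vset xyE) ?set21 ?set22. Qed.

End Vset.

Section Pieces.
Variables (V : finType) (G : rel V).
Hypotheses (symG : symmetric G) (irrG : irreflexive G).
Variable B : {set V}.
Hypothesis B2conn : forall v, connected_on G (B :\ v).

Definition good_piece (P : seq {set V}) :=
  [/\ vset P \subset B,
      forall e, e \in P -> exists c d, c != d /\ e = [set c; d],
      forall c d, link_rel P c d -> connect (induced G ((B :\: vset P) :|: [set c; d])) c d &
      forall v, connected_on (link_rel P) (vset P :\ v)].

Lemma mem_links_of x y : ([set x; y] \in links_of G B) =
  [&& x \in B, y \in B & [exists u, exists v, ([set x; y] == [set u; v]) && G u v]].
Proof. by rewrite /links_of mem_enum inE subUset !sub1set andbA. Qed.

Lemma link_rel_links_of x y : link_rel (links_of G B) x y = [&& x \in B, y \in B & G x y].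
Proof.
rewrite /link_rel /= mem_links_of; apply/idP/idP => [/and4P [_ -> ->] /existsP [u /existsP [v]]|].
  by case/andP=> /eqP /eq_set2 [[-> ->]|[-> ->]] //; rewrite symG.
case/and3P=> xB yB gxy; rewrite xB yB; apply/andP; split.
  by apply: contraTneq gxy => ->; rewrite irrG.
by apply/existsP; exists x; apply/existsP; exists y; rewrite eqxx.
Qed.

Lemma good_piece_links_of : good_piece (links_of G B).
Proof.
have vB : vset (links_of G B) \subset B.
  apply/subsetP => z /vsetP [e]; rewrite /links_of mem_enum inE => /andP [/subsetP eB _].
  exact: eB.
split=> // [e|c d|v u w].
- rewrite /links_of mem_enum inE => /andP [_ /existsP [u /existsP [v /andP [/eqP -> guv]]]].
  by exists u, v; split=> //; apply: contraTneq guv => ->; rewrite irrG.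
- rewrite link_rel_links_of => /and3P [_ _ gcd]; apply: connect1.
  by rewrite /induced /= !inE !eqxx !orbT.
move=> uP wP; have /setD1P [uv /(subsetP vB) uB] := uP.
have /setD1P [wv /(subsetP vB) wB] := wP.
have uw : connect (induced G (B :\ v)) u w by apply: B2conn; rewrite !inE ?uv ?wv.
apply: connect_sub uw => x y /and3P [/setD1P [xv xB] /setD1P [yv yB] gxy]; apply: connect1.
have xy : link_rel (links_of G B) x y by rewrite link_rel_links_of xB yB.
by have /andP [xP yP] := link_rel_vset xy; rewrite /induced /= !inE xv yv xP yP.
Qed.

Section Split.
Variables (P E1 E2 : seq {set V}) (a b : V).
Hypotheses (gP : good_piece P) (ab : a != b).
Hypotheses (PE : perm_eq P (E1 ++ E2)) (E12 : vset E1 :&: vset E2 = [set a; b]).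

Lemma mem_split_piece e : (e \in P) = (e \in E1) || (e \in E2).
Proof. by rewrite (perm_mem PE) mem_cat. Qed.

Lemma mem_split_cut z : z \in [set a; b] -> (z \in vset E1) && (z \in vset E2).
Proof. by rewrite -E12 inE. Qed.

Lemma vset_split_sub : vset ([set a; b] :: E1) \subset vset P.
Proof.
apply/subsetP => z; rewrite vset_cons (vset_perm_cat PE).
by case/setUP=> [/mem_split_cut /andP [z1 _]|z1]; apply/setUP; left.
Qed.

Lemma vset_split_out z :
  z \in vset E2 -> z \notin [set a; b] -> z \notin vset ([set a; b] :: E1).
Proof.
move=> z2 zab; rewrite vset_cons in_setU negb_or zab /=.
by apply: contra zab => z1; rewrite -E12 inE z1 z2.
Qed.

Lemma link_rel_split_out x y :
  x \in vset E2 -> x \notin [set a; b] -> link_rel P x y -> link_rel E2 x y.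
Proof.
move=> x2 xab /andP [xy]; rewrite /link_rel /= xy mem_split_piece => /orP [xy1|//].
by move: xab; rewrite -E12 inE x2 (mem_vset xy1) ?set21.
Qed.

Lemma split_links_connect : connect (link_rel E2) b a.
Proof.
have [_ gP2 _ gP4] := gP; have /andP [_ /vsetP [e eE2 be]] := mem_split_cut (set22 a b).
have [c [d [cd ecd]]] : exists c d, c != d /\ e = [set c; d].
  by apply: gP2; rewrite mem_split_piece eE2 orbT.
have [d' bd'] : exists d', link_rel E2 b d'.
  move: be; rewrite ecd => /set2P [] ->.
    by exists d; rewrite /link_rel /= cd -ecd.
  by exists c; rewrite /link_rel /= eq_sym cd setUC -ecd.
have [<-|d'a] := eqVneq d' a; first exact: connect1.
(* Links of [P] at vertices of [E2] off the cut are in [E2], so a walk of links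
   from [d'] to [a] avoiding [b] stays in [E2]. *)
have /andP [_ d'2] := link_rel_vset bd'.
set K := [set z | (z \in vset E2) && (z \notin [set a; b])].
have d'K : d' \in K by rewrite inE d'2 !inE negb_or d'a eq_sym; case/andP: bd'.
have aK : a \notin K by rewrite inE set21 andbF.
have vP z : z \in vset E2 -> z \in vset P by rewrite (vset_perm_cat PE) in_setU orbC => ->.
have d'S : d' \in vset P :\ b by rewrite !inE vP // andbT eq_sym; case/andP: bd'.
have aS : a \in vset P :\ b.
  by rewrite !inE ab vP //; case/andP: (mem_split_cut (set21 a b)).
have d'a_conn := gP4 b d' a d'S aS.
have [u [v [uK vK /and3P [_ /setD1P [vb _] uv] d'u]]] := connect_exit d'a_conn d'K aK.
have {}uv : link_rel E2 u v by case/setIdP: uK => u2 uab; apply: link_rel_split_out.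
have va : v = a.
  have /andP [_ v2] := link_rel_vset uv.
  by move: vK; rewrite inE v2 negbK => /set2P [] // vb'; move: vb; rewrite vb' eqxx.
apply: connect_trans (connect1 bd') (connect_trans _ (connect1 (_ : link_rel E2 u a))).
  apply: connect_sub (connect_induced_induced d'u) => x y /and3P [/setIdP [x2 xab] _ xy].
  by apply: connect1; apply: link_rel_split_out.
by rewrite -va.
Qed.

Lemma split_virtual_link :
  connect (induced G ((B :\: vset ([set a; b] :: E1)) :|: [set a; b])) a b.
Proof.
have [gP1 _ gP3 _] := gP.
have out z : z \in vset E2 -> z \in (B :\: vset ([set a; b] :: E1)) :|: [set a; b].
  move=> z2; apply/setUP; case: (boolP (z \in [set a; b])) => zab; [by right | left].
  rewrite in_setD vset_split_out //= (subsetP gP1) //.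
  by rewrite (vset_perm_cat PE) in_setU z2 orbT.
have E2ab : connect (link_rel E2) a b.
  by rewrite (sym_connect_sym (link_rel_sym E2)) split_links_connect.
apply: connect_sub E2ab => x y xy; have /andP [x2 y2] := link_rel_vset xy.
have xyP : link_rel P x y.
  by case/andP: xy => xy xyE; rewrite /link_rel /= xy mem_split_piece xyE orbT.
apply: connect_induced_sub (gP3 x y xyP); apply/subsetP => z.
case/setUP=> [/setDP [zB zP]|/set2P [] ->]; last 2 first; [exact: out | exact: out |].
rewrite in_setU in_setD zB andbT; apply/orP; left.
by apply: contra zP; apply: (subsetP vset_split_sub).
Qed.

Lemma split_piece_connected v :
  connected_on (link_rel ([set a; b] :: E1)) (vset ([set a; b] :: E1) :\ v).
Proof.
have [_ _ _ gP4] := gP.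
move=> u w uP1 wP1; set P1 := [set a; b] :: E1 in uP1 wP1 *.
have abP1 z : z \in [set a; b] -> z \in vset P1.
  by move=> zab; rewrite vset_cons; apply/setUP; left.
(* Collapse the vertices of [E2] off the cut onto an end [c] of the virtual
   link other than [v]. *)
pose c := if v == a then b else a.
have cab : c \in [set a; b] by rewrite /c; case: ifP; rewrite !inE eqxx ?orbT.
have cv : c != v by rewrite /c; case: (eqVneq v a) => [->|va]; rewrite eq_sym.
pose f z := if (z \in vset E2) && (z \notin [set a; b]) then c else z.
have fid z : z \in vset P1 -> f z = z.
  move=> zP1; rewrite /f; case: ifP => // /andP [z2 zab].
  by move: zP1; rewrite (negbTE (vset_split_out z2 zab)).
have sub1 z : z \in vset P1 :\ v -> z \in vset P :\ v.
  by rewrite !inE => /andP [-> /(subsetP vset_split_sub)].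
have [fu fw] := (fid u (setD1P uP1).2, fid w (setD1P wP1).2).
rewrite -fu -fw; apply: connect_map (gP4 v u w (sub1 _ uP1) (sub1 _ wP1)).
move=> x y /and3P [/setD1P [xv _] /setD1P [yv _] xy].
case/andP: (xy) => _; rewrite mem_split_piece => /orP [xy1|xy2].
  have x1 : x \in vset P1 by rewrite vset_cons in_setU (mem_vset xy1) ?set21 ?orbT.
  have y1 : y \in vset P1 by rewrite vset_cons in_setU (mem_vset xy1) ?set22 ?orbT.
  rewrite !fid //; right; apply/and3P; split; rewrite ?in_setD1 ?xv ?yv //.
  by case/andP: xy => xy _; rewrite /link_rel /= xy inE xy1 orbT.
have x2 : x \in vset E2 := mem_vset xy2 (set21 x y).
have y2 : y \in vset E2 := mem_vset xy2 (set22 x y).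
have fab z : z \in vset E2 -> z != v -> (f z \in [set a; b]) && (f z != v).
  by move=> z2 zv; rewrite /f z2 /=; case: ifP => [_|/negbFE ->]; rewrite ?cab ?cv ?zv.
have /andP [fx fxv] := fab x x2 xv; have /andP [fy fyv] := fab y y2 yv.
have [->|fxy] := eqVneq (f x) (f y); [by left | right].
have fxP : f x \in vset P1 :\ v by rewrite in_setD1 fxv abP1.
have fyP : f y \in vset P1 :\ v by rewrite in_setD1 fyv abP1.
by rewrite /induced /= fxP fyP /link_rel /= fxy (set2_of_mem fx fy fxy) mem_head.
Qed.

Lemma good_piece_split : good_piece ([set a; b] :: E1).
Proof.
have [gP1 gP2 gP3 _] := gP.
split; last exact: split_piece_connected.
- exact: subset_trans vset_split_sub gP1.
- move=> e; rewrite inE => /orP [/eqP ->|eE1]; first by exists a, b.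
  by apply: gP2; rewrite mem_split_piece eE1.
move=> c d /andP [cd]; rewrite inE => /orP [/eqP E|cdE1].
  rewrite E; case: (eq_set2 E) => [[-> ->]|[-> ->]]; first exact: split_virtual_link.
  by rewrite (connect_induced_sym symG); apply: split_virtual_link.
apply: connect_induced_sub (gP3 c d _); first exact/setSU/setDS/vset_split_sub.
by rewrite /link_rel /= cd mem_split_piece cdE1.
Qed.

End Split.

Lemma good_piece_pieces Ps : split_pieces G B Ps -> forall P, P \in Ps -> good_piece P.
Proof.
elim=> [|Qs P a b P1 P2 _ IH PQs [ab [E1 [E2 [PE _ _ E12 [-> ->]]]]]] Q.
  by rewrite inE => /eqP ->; apply: good_piece_links_of.
rewrite 2!in_cons => /or3P [/eqP ->|/eqP ->|/mem_rem /IH //].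
  exact: good_piece_split (IH _ PQs) ab PE E12.
have PE' : perm_eq P (E2 ++ E1) by rewrite (perm_trans PE) // perm_catC.
by apply: good_piece_split (IH _ PQs) ab PE' _; rewrite setIC.
Qed.

Section Unsplittable.
Variables (P : seq {set V}) (a b : V).
Hypotheses (gP : good_piece P) (ab : a != b) (aP : a \in vset P) (bP : b \in vset P).
Local Notation S := (B :\: [set a; b]).

Lemma link_component_closed x c d : link_rel P c d -> c \in component G S x ->
  (d \in component G S x) || (d \in [set a; b]).
Proof.
have [gP1 _ gP3 _] := gP.
move=> cd cC; have [dab|dab] := boolP (d \in [set a; b]); first by rewrite orbT.
have /andP [_ dP] := link_rel_vset cd.
have dS : d \in S by rewrite in_setD dab (subsetP gP1).
have cS : c \in S := subsetP (component_sub G S x) c cC.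
have cdS : (B :\: vset P) :|: [set c; d] \subset S.
  apply/subsetP => z /setUP [/setDP [zB zP]|/set2P [] -> //].
  by rewrite in_setD zB andbT; apply: contra zP => /set2P [] ->.
move: cC; rewrite inE => /andP [_ xc]; apply/orP; left.
by rewrite inE dS (connect_trans xc (connect_induced_sub cdS (gP3 c d cd))).
Qed.

Lemma link_exit x y c : c \in [set a; b] ->
  x \in vset P -> y \in vset P -> x \notin [set a; b] -> y \notin [set a; b] ->
  ~~ connect (induced G S) x y -> exists2 u, u \in component G S x & link_rel P u c.
Proof.
have [gP1 _ _ gP4] := gP.
move=> cab xP yP xab yab nxy.
have [c' c'ab c'c] : exists2 c', c' \in [set a; b] & c' != c.
  by case/set2P: cab => ->; [exists b; rewrite ?set22 // eq_sym | exists a; rewrite ?set21].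
have xc' : x != c' by apply: contraNneq xab => ->.
have yc' : y != c' by apply: contraNneq yab => ->.
have xy : connect (induced (link_rel P) (vset P :\ c')) x y by apply: gP4; rewrite !inE ?xc' ?yc'.
have xC : x \in component G S x by rewrite inE in_setD xab (subsetP gP1) ?connect0.
have yC : y \notin component G S x by rewrite inE negb_and nxy orbT.
have [u [v [uC vC /and3P [_ /setD1P [vc' _] uv] _]]] := connect_exit xy xC yC.
have vab : v \in [set a; b] by have := link_component_closed uv uC; rewrite (negbTE vC).
by exists u; rewrite // -(set2_other cab c'ab vab _ vc') // eq_sym.
Qed.

Lemma vset_component_cut x (C := component G S x) :
  vset [seq e : {set V} <- P | ~~ [disjoint e & C]] :&:
  vset [seq e : {set V} <- P | [disjoint e & C]] \subset [set a; b].
Proof.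
have [_ gP2 _ _] := gP.
apply/subsetP => z /setIP [/vsetP [e1 e1E z1] /vsetP [e2 e2E z2]].
move: e1E e2E; rewrite !mem_filter => /andP [meet e1P] /andP [dis _].
have zC : z \notin C by rewrite (disjointFr dis z2).
move: meet; rewrite -setI_eq0 => /set0Pn [z0 /setIP [z0e1 z0C]].
have [c [d [cd ecd]]] := gP2 e1 e1P; rewrite ecd in z0e1 z1.
have z0z : z0 != z by apply: contraNneq zC => <-.
have z0z_link : link_rel P z0 z by rewrite /link_rel /= z0z (set2_of_mem z0e1 z1 z0z) -ecd.
by have := link_component_closed z0z_link z0C; rewrite (negbTE zC).
Qed.

Lemma disjoint_link_component x y u c : ~~ connect (induced G S) x y ->
  u \in component G S y -> c \in [set a; b] -> [disjoint [set u; c] & component G S x].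
Proof.
move=> nxy uCy cab; rewrite disjoints_subset subUset !sub1set !in_setC; apply/andP; split.
  apply/negP => /setIdP [_ xu]; case/setIdP: uCy => _ yu; move/negP: nxy; apply.
  by apply: connect_trans xu _; rewrite (connect_induced_sym symG).
by apply/negP => /(subsetP (component_sub G S x)); rewrite in_setD cab.
Qed.

(* The links meeting the component of [x] and the other links split [P] at
   [{a, b}]: both sides contain a link to [a] and one to [b]. *)
Lemma component_split_at x y (C := component G S x) :
  x \in vset P -> y \in vset P -> x \notin [set a; b] -> y \notin [set a; b] ->
  ~~ connect (induced G S) x y ->
  split_at P a b ([set a; b] :: [seq e : {set V} <- P | ~~ [disjoint e & C]])
                 ([set a; b] :: [seq e : {set V} <- P | [disjoint e & C]]).
Proof.
move=> xP yP xab yab nxy.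
have nyx : ~~ connect (induced G S) y x by rewrite (connect_induced_sym symG).
have [u1 u1C u1a] := link_exit (set21 a b) xP yP xab yab nxy.
have [u2 u2C u2b] := link_exit (set22 a b) xP yP xab yab nxy.
have [u3 u3C u3a] := link_exit (set21 a b) yP xP yab xab nyx.
have [u4 u4C u4b] := link_exit (set22 a b) yP xP yab xab nyx.
have inE1 u c : u \in C -> link_rel P u c ->
    [set u; c] \in [seq e : {set V} <- P | ~~ [disjoint e & C]].
  move=> uC /andP [_ ucP]; rewrite mem_filter ucP andbT -setI_eq0.
  by apply/set0Pn; exists u; rewrite in_setI set21.
have inE2 u c : u \in component G S y -> c \in [set a; b] -> link_rel P u c ->
    [set u; c] \in [seq e : {set V} <- P | [disjoint e & C]].
  by move=> uCy cab /andP [_ ucP]; rewrite mem_filter ucP (disjoint_link_component nxy).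
have neq u u' : u \in S -> [set u; a] != [set u'; b].
  move=> uS; apply/negP => /eqP E; have := set22 u' b; rewrite -E => /set2P [bu|ba].
    by move: uS; rewrite -bu in_setD set22.
  by move: ab; rewrite ba eqxx.
have [CxS CyS] := (subsetP (component_sub G S x), subsetP (component_sub G S y)).
split=> //; eexists; eexists; split; last by [].
- by rewrite perm_sym perm_catC perm_filterC.
- by apply: (size_gt1 (inE1 _ _ u1C u1a) (inE1 _ _ u2C u2b)); apply/neq/CxS.
- apply: (size_gt1 (inE2 _ _ u3C (set21 a b) u3a) (inE2 _ _ u4C (set22 a b) u4b)).
  exact/neq/CyS.
apply/eqP; rewrite eqEsubset; apply/andP; split; first exact: vset_component_cut.
apply/subsetP => z /set2P [] ->; apply/setIP; split.
- by apply: mem_vset (inE1 _ _ u1C u1a) _; rewrite set22.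
- by apply: mem_vset (inE2 _ _ u3C (set21 a b) u3a) _; rewrite set22.
- by apply: mem_vset (inE1 _ _ u2C u2b) _; rewrite set22.
- by apply: mem_vset (inE2 _ _ u4C (set22 a b) u4b) _; rewrite set22.
Qed.

Lemma unsplittable_connect x y : (forall P1 P2, ~ split_at P a b P1 P2) ->
  x \in vset P -> y \in vset P -> x \notin [set a; b] -> y \notin [set a; b] ->
  connect (induced G S) x y.
Proof.
move=> nosplit xP yP xab yab; apply/negPn/negP => nxy.
exact: nosplit (component_split_at xP yP xab yab nxy).
Qed.

End Unsplittable.

End Pieces.

(** * Separating pairs of T *)

Lemma biconnected_component_connected (V : finType) (G : rel V) (B : {set V}) :
  symmetric G -> biconnected_component G B -> forall v, connected_on G (B :\ v).
Proof.
move=> symG [[[_ [BC Bv]]|[u [w [uw EB guw]]]] _] v.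
  have [vB|vB] := boolP (v \in B); first exact: Bv.
  suff -> : B :\ v = B by [].
  by apply/setP => z; rewrite !inE; case: eqVneq => // ->; rewrite (negbTE vB).
move=> y z /setD1P [yv yB] /setD1P [zv zB]; have [<-|yz] := eqVneq y z; first exact: connect0.
apply: connect1; rewrite /induced /= !inE yv zv yB zB /=.
rewrite EB in yB zB.
by case: (eq_set2 (set2_of_mem yB zB yz)) => [[-> ->]|[-> ->]]; rewrite // symG.
Qed.

Lemma partial_choice (A C : Type) (c0 : C) (R : A -> C -> Prop) :
  exists f : A -> C, forall x, (exists c, R x c) -> R x (f x).
Proof.
apply: (ClassicalEpsilon.choice (fun x c => (exists c, R x c) -> R x c)) => x.
by case: (classic (exists c, R x c)) => [[c xc]|nc]; [exists c | exists c0].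
Qed.

Section Separation.
Variables (V : finType) (G : rel V).
Hypotheses (symG : symmetric G) (irrG : irreflexive G).
Variables (M B T : {set V}).
Hypothesis B2conn : forall v, connected_on G (B :\ v).
Hypothesis TB : T \subset B.
Hypothesis T_unseparated : forall a b x y, a != b -> a \in T -> b \in T -> x \in T -> y \in T ->
  x \notin [set a; b] -> y \notin [set a; b] -> connect (induced G (B :\: [set a; b])) x y.

Definition separating a b w := [/\ a \in T, b \in T & separates G M B T a b w].

Definition region a b w := component G (B :\: [set a; b]) w.

Lemma separating_sym a b w : separating a b w -> separating b a w.
Proof.
have E : [set b; a] = [set a; b] by rewrite setUC.
case=> aT bT [[ab aB bB [u [w' [uS wS nc]]]] ag wab [x [xT nx]]].
split=> //; split; rewrite ?E //.
- by split; rewrite 1?eq_sym //; exists u, w'; rewrite E.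
- by exists x.
Qed.

Lemma region_sym a b w : region a b w = region b a w.
Proof. by rewrite /region setUC. Qed.

Lemma mem_region_w a b w : separating a b w -> w \in region a b w.
Proof. by case=> _ _ [_ [wB _] wab _]; rewrite inE connect0 inE wab wB. Qed.

Lemma region_notin_T a b w z : separating a b w -> z \in region a b w -> z \notin T.
Proof.
case=> aT bT [[ab _ _ _] _ _ [x [/setDP [xT xab] nwx]]] /setIdP [/setDP [_ zab] wz].
apply/negP => zT; move/negP: nwx; apply; apply: connect_trans wz _.
exact: T_unseparated.
Qed.

Lemma region_adjacent a b w : separating a b w -> exists2 r, r \in region a b w & G a r.
Proof.
move=> sep; have wR := mem_region_w sep.
case: sep => _ _ [[ab aB bB _] [wB _] wab [x [/setDP [xT xab] nwx]]].
have wb : w != b by apply: contraNneq wab => ->; rewrite set22.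
have xb : x != b by apply: contraNneq xab => ->; rewrite set22.
have xB := subsetP TB x xT.
have wx : connect (induced G (B :\ b)) w x by apply: B2conn; rewrite !inE ?wb ?xb ?wB ?xB.
have xR : x \notin region a b w by rewrite inE negb_and nwx orbT.
have [u [v [uR vR /and3P [_ /setD1P [vb vB] guv] _]]] := connect_exit wx wR xR.
exists u => //; rewrite symG; have [<- //|va] := eqVneq v a.
by move: vR; rewrite (component_closed uR _ guv) // !inE negb_or va vb.
Qed.

Lemma region_ab_path a b w : separating a b w ->
  exists q, ab_path G (region a b w) a b q /\ w \in q.
Proof.
move=> sep; have [r rR ar] := region_adjacent sep.
have [_ _ [[ab _ bB _] _ _ _]] := sep.
apply: (ab_path_through symG irrG B2conn ab bB _ _ _ rR ar (mem_region_w sep)).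
- exact: component_sub.
- by move=> u v; apply: component_closed.
- exact: component_connected.
Qed.

Lemma region_fan a b w : separating a b w -> exists f, fan G (region a b w) a b w f.
Proof.
move=> sep; have [q [gq wq]] := region_ab_path sep.
have [_ _ [[ab _ _ _] _ _ _]] := sep.
exact: (ab_path_fan symG ab gq wq (mem_region_w sep)).
Qed.

Lemma region_attach a b w a' b' w' : separating a b w -> separating a' b' w' ->
  region a b w = region a' b' w' -> a \in [set a'; b'].
Proof.
move=> sep sep' E; have [r rR ar] := region_adjacent sep.
have [aT _ [[_ aB _ _] _ _ _]] := sep.
apply: contraT => aab; have : a \in region a' b' w'.
  apply: (component_closed (u := r)); first by move: rR; rewrite E.
    by rewrite inE aab aB.
  by rewrite symG.
by move/(region_notin_T sep'); rewrite aT.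
Qed.

Lemma region_meet_sub a b w a' b' w' z : separating a b w -> separating a' b' w' ->
  z \in region a b w -> z \in region a' b' w' -> region a b w \subset region a' b' w'.
Proof.
move=> sep [a'T b'T _] zR zR'; apply/subsetP => r rR.
have sub : region a b w \subset B :\: [set a'; b'].
  apply/subsetP => y yR; have /setDP [yB _] := subsetP (component_sub G _ w) y yR.
  rewrite inE yB andbT; apply: contraNN (region_notin_T sep yR).
  by case/set2P => ->.
have zr := connect_induced_sub sub (component_connected symG zR rR).
case/setIdP: zR' => _ w'z.
by rewrite inE (subsetP sub r rR) (connect_trans w'z zr).
Qed.

Lemma region_disjoint a b w a' b' w' z : separating a b w -> separating a' b' w' ->
  region a b w != region a' b' w' -> z \in region a b w -> z \notin region a' b' w'.
Proof.
move=> sep sep' ne zR; apply: contra ne => zR'.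
by rewrite eqEsubset (region_meet_sub sep sep' zR zR') (region_meet_sub sep' sep zR' zR).
Qed.

Definition attached mu R :=
  exists a b w, [/\ separating a b w, mu \in [set a; b] & R = region a b w].

Lemma attached_mem mu R a b w :
  attached mu R -> separating a b w -> R = region a b w -> mu \in [set a; b].
Proof.
case=> a1 [b1 [w1 [sep1 /set2P [] -> ->]]] sep E; first exact: region_attach sep1 sep E.
by apply: region_attach (separating_sym sep1) sep _; rewrite -region_sym.
Qed.

Lemma region_fan_choice : exists fo : {set V} -> V -> seq V, forall R,
  (exists a b w, separating a b w /\ R = region a b w) ->
  exists a b w, [/\ separating a b w, R = region a b w & fan G R a b w (fo R)].
Proof.
pose good R f := exists a b w, [/\ separating a b w, R = region a b w & fan G R a b w f].
have [fo foP] := partial_choice (fun _ => [::]) good.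
exists fo => R [a [b [w [sep ->]]]]; apply: foP.
by have [f ff] := region_fan sep; exists f, a, b, w.
Qed.

(* Vantages attached to the same region take their paths from one fan chosen
   for the region, which makes them internally disjoint. *)
Section Assemble.
Variable reg : V -> {set V}.
Hypothesis regP : forall mu, (exists R, attached mu R) -> attached mu (reg mu).
Variable fo : {set V} -> V -> seq V.
Hypothesis foP : forall R, (exists a b w, separating a b w /\ R = region a b w) ->
  exists a b w, [/\ separating a b w, R = region a b w & fan G R a b w (fo R)].

Definition vantage_path mu :=
  if excluded_middle_informative (agent G M B mu) then [::] else fo (reg mu) mu.

Lemma vantage_fan mu : vantage G M B T mu -> ~ agent G M B mu ->
  exists a b w, [/\ separating a b w, reg mu = region a b w, mu \in [set a; b] &
                    fan G (reg mu) a b w (fo (reg mu))].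
Proof.
case=> _ [//|[a [b [w [mab aT bT sep]]]]] _.
have /regP att : exists R, attached mu R by exists (region a b w), a, b, w.
have [a1 [b1 [w1 [sep1 _ E1]]]] := att.
have reg_mu : exists a b w, separating a b w /\ reg mu = region a b w by exists a1, b1, w1.
have [a2 [b2 [w2 [sep2 E2 f2]]]] := foP reg_mu.
by exists a2, b2, w2; split=> //; apply: attached_mem att sep2 E2.
Qed.

Lemma vantage_path_agent mu : agent G M B mu -> vantage_path mu = [::].
Proof. by rewrite /vantage_path; case: excluded_middle_informative. Qed.

Lemma vantage_path_nonagent mu : ~ agent G M B mu -> vantage_path mu = fo (reg mu) mu.
Proof. by rewrite /vantage_path; case: excluded_middle_informative. Qed.

Lemma vantage_path_external mu :
  vantage G M B T mu -> external_path G M B T mu (vantage_path mu).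
Proof.
move=> vmu; have [ag|nag] := classic (agent G M B mu).
  by rewrite vantage_path_agent //; split; rewrite //= andbT.
rewrite vantage_path_nonagent //.
have [a [b [w [sep E mab [fP _]]]]] := vantage_fan vmu nag.
have [pth uq lt fR] := fP mu mab; split=> //; first by rewrite lt; case: sep => _ _ [].
by apply/allP => z /(allP fR); rewrite E; apply: region_notin_T sep.
Qed.

Lemma vantage_path_disjoint mu nu : vantage G M B T mu -> vantage G M B T nu -> mu != nu ->
  [disjoint inner mu (vantage_path mu) & nu :: vantage_path nu].
Proof.
move=> vmu vnu mn; have [ag|nag] := classic (agent G M B mu).
  by rewrite vantage_path_agent // disjoint_has.
rewrite vantage_path_nonagent //.
have [a [b [w [sep E mab [fP fD]]]]] := vantage_fan vmu nag.
have inR z : z \in inner mu (fo (reg mu) mu) -> z \in region a b w.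
  by have [_ _ _ /allP fR] := fP mu mab; move/mem_inner/fR; rewrite E.
rewrite disjoint_sym disjoint_cons (contraNN (inR nu)) /=; last first.
  by case: vnu => nuT _; apply: contraTN nuT; apply: region_notin_T sep.
have [agn|nagn] := classic (agent G M B nu).
  by rewrite vantage_path_agent // disjoint_has.
rewrite vantage_path_nonagent //.
have [a' [b' [w' [sep' E' nab' [fP' _]]]]] := vantage_fan vnu nagn.
have [Eq|ne] := eqVneq (reg mu) (reg nu).
  have nab : nu \in [set a; b].
    by apply: (attached_mem (R := reg nu)) sep _; [exists a', b', w' | rewrite -Eq].
  by move: (fD mu nu mab nab mn); rewrite -Eq disjoint_sym disjoint_cons => /andP [].
have [_ _ _ /allP fR'] := fP' nu nab'.
apply/disjoint_seqP => z /fR'; rewrite E' => zR' /inR zR.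
by move: zR'; apply/negP; apply: region_disjoint sep sep' _ zR; rewrite -E -E'.
Qed.

End Assemble.

Lemma vantage_paths_exist : exists P : V -> seq V,
  [/\ forall mu, vantage G M B T mu -> external_path G M B T mu (P mu),
      forall mu, vantage G M B T mu -> agent G M B mu -> P mu = [::] &
      forall mu nu, vantage G M B T mu -> vantage G M B T nu -> mu != nu ->
        [disjoint inner mu (P mu) & nu :: P nu]].
Proof.
have [reg regP] := partial_choice set0 attached.
have [fo foP] := region_fan_choice.
exists (vantage_path reg fo); split=> [mu|mu _|mu nu].
- exact: (vantage_path_external regP foP).
- exact: (vantage_path_agent reg fo).
- exact: (vantage_path_disjoint regP foP).
Qed.

End Separation.

Theorem mainTheorem2 (V : finType) (G : rel V) (M B T : {set V}) :
  symmetric G -> irreflexive G ->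
  (forall u v, connect G u v) ->
  biconnected_component G B ->
  triconnected_component G B T ->
  exists P : V -> seq V,
    [/\ forall mu, vantage G M B T mu -> external_path G M B T mu (P mu),
        forall mu, vantage G M B T mu -> agent G M B mu -> P mu = [::] &
        forall mu nu, vantage G M B T mu -> vantage G M B T nu -> mu != nu ->
          [disjoint inner mu (P mu) & nu :: P nu]].
Proof.
move=> symG irrG _ Bbic [Ps [P0 [spl unsplit P0Ps ->]]].
have B2conn := biconnected_component_connected symG Bbic.
have gP0 := good_piece_pieces symG irrG B2conn spl P0Ps.
apply: (vantage_paths_exist symG irrG M B2conn); first by case: gP0.
move=> a b x y ab aT bT xT yT; apply: (unsplittable_connect symG gP0 ab aT bT) => //.
by move=> P1 P2; apply: unsplit P0Ps.
Qed.
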